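(* Let $R$ be a commutative ring, $I$ an ideal of $R$ and $n\ge 3$. Let $\varepsilon=\varepsilon_1\cdots\varepsilon_r\in\mathrm{EO}^1_{2n}(R,I)$ where each $\varepsilon_k$ is one of the generators $oe_{1i}(a)$ ($a\in R$, $3\le i\le 2n$) or $oe_{j1}(x)$ ($x\in I$, $3\le j\le 2n$). Let $oe_{ij}(Xf(X))$ be a generator of $\mathrm{EO}^1_{2n}(R[X],I[X])$, i.e. either $i=1$, $3\le j\le 2n$ and $f(X)\in R[X]$, or $j=1$, $3\le i\le 2n$ and $f(X)\in I[X]$. Then in $\mathrm{EO}_{2n}(R[X,Y])$ $$\varepsilon\, oe_{ij}\big(Y^{4^r}Xf(Y^{4^r}X)\big)\,\varepsilon^{-1}=\prod_{t=1}^s oe_{i_tj_t}\big(Yh_t(X,Y)\big)$$ for some $s$, where for each $t$ either $i_t=1$ and $h_t(X,Y)\in R[X,Y]$, or $j_t=1$ and $h_t(X,Y)\in I[X,Y]$.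
   Context: Let $\sigma$ be the permutation of $\{1,\dots,2n\}$ with $\sigma(2i)=2i-1$, $\sigma(2i-1)=2i$. For a commutative ring $A$, $z\in A$ and $1\le i\ne j\le 2n$ with $i\ne\sigma(j)$, $oe_{ij}(z)=1_{2n}+z e_{ij}-z e_{\sigma(j)\sigma(i)}$ (these are orthogonal with respect to $\widetilde\psi_n=\sum_{i=1}^n(e_{2i-1,2i}+e_{2i,2i-1})$), and $\mathrm{EO}_{2n}(A)$ is the group they generate. For an ideal $J$ of $A$, $\mathrm{EO}^1_{2n}(A,J)$ is the subgroup of $\mathrm{EO}_{2n}(A)$ generated by $oe_{1i}(a)$, $oe_{j1}(x)$ with $a\in A$, $x\in J$, $3\le i,j\le 2n$. $I[X]=IR[X]$, $I[X,Y]=IR[X,Y]$. *)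

From HB Require Import structures.
From mathcomp Require Import all_boot all_order all_algebra.
Set Implicit Arguments. Unset Strict Implicit. Unset Printing Implicit Defensive.
Import GRing.Theory.
Local Open Scope ring_scope.

(* Indices are 0-based: paper index k (1 <= k <= 2n) is k-1 here.
   The paper's sigma (2i <-> 2i-1) becomes  k <-> k xor 1  on 0-based indices. *)
Definition sig (k : nat) : nat := if odd k then k.-1 else k.+1.

Definition oe (A : comNzRingType) (n i j : nat) (z : A) : 'M[A]_(n.*2) :=
  \matrix_(a, b) (((a == b :> nat)%:R : A)
                  + z * ((a == i :> nat) && (b == j :> nat))%:R
                  - z * ((a == sig j :> nat) && (b == sig i :> nat))%:R).

Definition oe_idx (n i j : nat) : bool :=
  [&& (i < n.*2)%N, (j < n.*2)%N, i != j & i != sig j].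

Definition oe_prod (A : comNzRingType) (n : nat) (s : seq (nat * nat * A))
  : 'M[A]_(n.*2) :=
  foldr (fun g M => oe n g.1.1 g.1.2 g.2 *m M) 1%:M s.

Definition is_ideal (R : comNzRingType) (I : {pred R}) : Prop :=
  [/\ 0 \in I,
      (forall x y, x \in I -> y \in I -> x + y \in I) &
      (forall a x, x \in I -> a * x \in I)].

(* Generators of EO^1_{2n}(R, I): oe_{1i}(a), a in R, 3 <= i <= 2n;
   oe_{j1}(x), x in I, 3 <= j <= 2n   (0-based: 1 -> 0, 3..2n -> 2..2n-1). *)
Definition EO1_gen (R : comNzRingType) (n : nat) (I : {pred R})
  (g : nat * nat * R) : bool :=
  ((g.1.1 == 0%N) && (2 <= g.1.2 < n.*2)%N)
  || [&& g.1.2 == 0%N, (2 <= g.1.1 < n.*2)%N & g.2 \in I].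

Definition polyI (R : comNzRingType) (I : {pred R}) (p : {poly R}) : Prop :=
  forall k, p`_k \in I.
Definition polyI2 (R : comNzRingType) (I : {pred R}) (h : {poly {poly R}}) : Prop :=
  forall k l, (h`_k)`_l \in I.

(* R[X,Y] is modelled as {poly {poly R}}: inner variable X, outer variable Y. *)
Definition varX (R : comNzRingType) : {poly {poly R}} := ('X)%:P.
Definition varY (R : comNzRingType) : {poly {poly R}} := 'X.
Definition cst2 (R : comNzRingType) (a : R) : {poly {poly R}} := (a%:P)%:P.
Definition eval2 (R : comNzRingType) (f : {poly R}) (u : {poly {poly R}}) :=
  (map_poly (@cst2 R) f).[u].

From HB Require Import structures.
From mathcomp Require Import all_boot all_order all_algebra.
From mathcomp Require Import ring zify.
Import GRing.Theory.
Local Open Scope ring_scope.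
Set Implicit Arguments. Unset Strict Implicit. Unset Printing Implicit Defensive.

(* Let [EO1_Ydvd m] be the set of products of generators oe_{0k}(Y^m h) and
   oe_{k0}(Y^m h), h in I[X,Y] for the latter, of EO^1_{2n}(R[X,Y], I[X,Y]).
   Conjugation by one generator of EO^1_{2n}(R, I) maps [EO1_Ydvd (4 m)] into
   [EO1_Ydvd m]; iterating over the r factors of eps, starting from the single
   generator oe_{ij}(Y^(4^r) X f(Y^(4^r) X)), gives the theorem.
   For most pairs of generators the conjugate is the generator itself or is
   given by a Chevalley commutator relation [oe_{ij}, oe_{jk}] = oe_{ik}; and
   oe_{kl}(Y^(2m) h) with k, l >= 2 and h in I[X,Y] is a commutator of two
   generators with entries divisible by Y^m. The factor 4 is spent on the
   opposite pairs oe_{0q}, oe_{q0}: the conjugated generator is first written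
   as a commutator through an auxiliary index p (this is where n >= 3 is
   needed), e.g. oe_{q0}(Y^(4m) h) = [oe_{qp}(Y^(2m)), oe_{p0}(Y^(2m) h)], and
   the factors oe_{qp}(.), which are not in EO^1, are regrouped so that they
   only act by conjugation, which preserves [EO1_Ydvd m]. *)

Section Unipotent.
Variables (A : comNzRingType) (N : nat).
Implicit Types (x y : A) (M : 'M[A]_N).

Definition unip x M : 'M[A]_N := 1%:M + x *: M.

Lemma unip_mul x y M1 M2 :
  unip x M1 *m unip y M2 = 1%:M + x *: M1 + y *: M2 + (x * y) *: (M1 *m M2).
Proof.
rewrite /unip mulmxDl !mulmxDr !mul1mx !mulmx1 -scalemxAl -scalemxAr scalerA.
by rewrite !addrA (addrAC _ (y *: M2)).
Qed.

Lemma unip_mulN x M : M *m M = 0 -> unip x M *m unip (- x) M = 1%:M.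
Proof. by move=> M2; rewrite unip_mul M2 scaler0 addr0 scaleNr addrK. Qed.

Lemma unip_comm x y M1 M2 :
  M1 *m M2 = M2 *m M1 -> unip x M1 *m unip y M2 = unip y M2 *m unip x M1.
Proof. by move=> M12; rewrite !unip_mul M12 mulrC (addrAC _ (x *: M1)). Qed.

Lemma unip_commutator x y M1 M2 :
  M1 *m M1 = 0 -> M2 *m M2 = 0 -> M1 *m M2 *m M1 = 0 -> M2 *m M1 *m M2 = 0 ->
  unip x M1 *m unip y M2 *m unip (- x) M1 *m unip (- y) M2
    = unip (x * y) (M1 *m M2 - M2 *m M1).
Proof.
move=> M11 M22 M121 M212.
rewrite unip_mul -!mulmxA unip_mul.
rewrite !(mulmxDl, mulmxDr, mul1mx, mulmx1, scalerDr, mulmxBr, mulmxBl).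
rewrite -!(scalemxAl, scalemxAr) !mulmxA M11 M22 M121 -(mulmxA M1 M2 M2) M22 M212 mulmx0.
rewrite !(scaler0, mul0mx, mulmx0, scalerA).
apply/matrixP => a b; rewrite !mxE.
set u := (M1 *m M2) a b; set v := (M2 *m M1) a b; ring.
Qed.
End Unipotent.

Lemma sigK k : sig (sig k) = k.
Proof. by rewrite /sig; case: k => [|k] //=; case O: (odd k) => /=; rewrite ?O //= negbK O. Qed.

Lemma sig0 : sig 0 = 1%N. Proof. by []. Qed.

Lemma sig_range n k : (1 < k < n.*2)%N -> (1 < sig k < n.*2)%N.
Proof. by rewrite /sig; case: ifP => *; lia. Qed.

Definition root_triple n i j k :=
  [&& (j < n.*2)%N, i != j, j != k, i != k, i != sig j, j != sig k & i != sig k].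

Section RootMatrices.
Variables (A : comNzRingType) (n : nat).
Local Notation N := n.*2.

(* Matrix units indexed by [nat]; an index out of range gives the zero matrix. *)
Definition emx (i j : nat) : 'M[A]_N :=
  \matrix_(a, b) ((a == i :> nat) && (b == j :> nat))%:R.

Definition oemx (i j : nat) : 'M[A]_N := emx i j - emx (sig j) (sig i).

Lemma oeE i j z : oe n i j z = unip z (oemx i j).
Proof. by apply/matrixP => a b; rewrite !mxE; ring. Qed.

Lemma emx_mul i j k l :
  emx i j *m emx k l = ((j == k) && (j < N)%N)%:R *: emx i l.
Proof.
apply/matrixP => a b; rewrite !mxE.
case: (ltnP j N) => [jN | Nj] /=; last first.
  rewrite andbF mul0r big1 // => c _; rewrite !mxE.
  have cj : (c == j :> nat) = false by rewrite ltn_eqF // (leq_trans (ltn_ord c)).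
  by rewrite cj andbF mul0r.
rewrite (bigD1 (Ordinal jN)) //= big1 ?addr0; last first.
  move=> c cj; rewrite !mxE (_ : (c == j :> nat) = false) ?andbF ?mul0r //.
  by apply: contraNF cj => /eqP cj; apply/eqP/val_inj.
rewrite !mxE eqxx andbT.
by case: (a == i :> nat); case: (j == k); case: (b == l :> nat); rewrite ?mulr1 ?mulr0.
Qed.

Ltac decide_idx := repeat match goal with
  | |- context [(?x == ?y :> nat)] =>
      (rewrite (_ : (x == y) = true); [|by apply/eqP; lia])
   || (rewrite (_ : (x == y) = false); [|by apply/negbTE/eqP; lia])
  | |- context [(?x < ?y)%N] =>
      (rewrite (_ : (x < y)%N = true); [|by lia])
   || (rewrite (_ : (x < y)%N = false); [|by apply/negbTE; lia])
  end.

(* Identities between root matrices: expand into matrix units and split on the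
   parities of the indices, which determine [sig]. *)
Ltac oemx_eval :=
  rewrite /oemx ?sigK ?sig0 /sig; repeat (case: ifP => ?); move=> *; try split;
  rewrite !(mulmxBl, mulmxBr, emx_mul, scalemxAl); decide_idx;
  rewrite ?(andFb, andTb, mulr1n, mulr0n, scale1r, scale0r, mul0mx, emx_mul); decide_idx;
  repeat match goal with |- context [(?x == ?y :> nat)] => case: (x =P y) => ?; decide_idx end;
  repeat match goal with |- context [(?x < ?y)%N] => case: (ltnP x y) => ?; decide_idx end;
  rewrite ?(andFb, andTb, andbT, mulr1n, mulr0n, scale1r, scale0r, mul0mx,
            subrr, subr0, sub0r, addr0, oppr0, opprK);
  try (apply/matrixP => ? ?; rewrite !mxE; ring).

Lemma oemx_sqr i j : i != j -> oemx i j *m oemx i j = 0.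
Proof. oemx_eval. Qed.

Lemma oemx_chevalley i j k : root_triple n i j k ->
  [/\ oemx i j *m oemx j k *m oemx i j = 0, oemx j k *m oemx i j *m oemx j k = 0
    & oemx i j *m oemx j k - oemx j k *m oemx i j = oemx i k].
Proof. rewrite /root_triple; oemx_eval. Qed.

Lemma oemx_0k_0l_comm k l : (0 < k)%N -> (0 < l)%N ->
  oemx 0 k *m oemx 0 l = oemx 0 l *m oemx 0 k.
Proof. oemx_eval. Qed.

Lemma oemx_k0_l0_comm k l : (0 < k)%N -> (0 < l)%N ->
  oemx k 0 *m oemx l 0 = oemx l 0 *m oemx k 0.
Proof. oemx_eval. Qed.

Lemma oemx_0k_sk0_comm k : (1 < k)%N ->
  oemx 0 k *m oemx (sig k) 0 = oemx (sig k) 0 *m oemx 0 k.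
Proof. oemx_eval. Qed.

Lemma oemx_kl_0l_comm k l : (1 < k)%N -> (1 < l)%N -> k != l ->
  oemx k l *m oemx 0 l = oemx 0 l *m oemx k l.
Proof. oemx_eval. Qed.

Lemma oemx_kl_k0_comm k l : (1 < k)%N -> (1 < l)%N -> k != l ->
  oemx k l *m oemx k 0 = oemx k 0 *m oemx k l.
Proof. oemx_eval. Qed.
End RootMatrices.

Section ElementaryConjugation.
Variables (A : comNzRingType) (n : nat).
Local Notation N := n.*2.
Local Notation oe := (@oe A n).
Implicit Types (x y z : A) (M : 'M[A]_N).

Lemma oe_mulN i j z : i != j -> oe i j z *m oe i j (- z) = 1%:M.
Proof. by move=> ij; rewrite !oeE unip_mulN // oemx_sqr. Qed.

Lemma oe_Nmul i j z : i != j -> oe i j (- z) *m oe i j z = 1%:M.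
Proof. by move=> ij; rewrite -{2}(opprK z) oe_mulN. Qed.

Lemma oe_comm i j k l x y :
  oemx A n i j *m oemx A n k l = oemx A n k l *m oemx A n i j ->
  oe i j x *m oe k l y = oe k l y *m oe i j x.
Proof. by move=> ijkl; rewrite !oeE unip_comm. Qed.

Lemma root_triple_neq i j k : root_triple n i j k -> i != j /\ j != k.
Proof. by case/and4P. Qed.

Lemma oe_commutator i j k x y : root_triple n i j k ->
  oe i j x *m oe j k y *m oe i j (- x) *m oe j k (- y) = oe i k (x * y).
Proof.
move=> ijk; have [ij jk] := root_triple_neq ijk; have [c1 c2 c3] := oemx_chevalley A ijk.
by rewrite !oeE unip_commutator ?oemx_sqr ?c3.
Qed.

Definition oe_conj i j z M := oe i j z *m M *m oe i j (- z).

Lemma oe_conjM i j z M1 M2 : i != j ->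
  oe_conj i j z (M1 *m M2) = oe_conj i j z M1 *m oe_conj i j z M2.
Proof. by move=> ij; rewrite /oe_conj !mulmxA -(mulmxA _ _ (oe i j z)) oe_Nmul // mulmx1. Qed.

Lemma oe_conj_id i j z M : i != j -> oe i j z *m M = M *m oe i j z -> oe_conj i j z M = M.
Proof. by move=> ij zM; rewrite /oe_conj zM -mulmxA oe_mulN // mulmx1. Qed.

Lemma oe_conjl i j k x y : root_triple n i j k ->
  oe_conj i j x (oe j k y) = oe i k (x * y) *m oe j k y.
Proof.
move=> ijk; have [_ jk] := root_triple_neq ijk.
by rewrite -(oe_commutator _ _ ijk) -[RHS]mulmxA oe_Nmul // mulmx1.
Qed.

Lemma oe_conjr i j k x y : root_triple n i j k ->
  oe_conj j k y (oe i j x) = oe i k (- (x * y)) *m oe i j x.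
Proof.
move=> ijk; have [ij jk] := root_triple_neq ijk; have [c1 c2 c3] := oemx_chevalley A ijk.
have comm : oe j k y *m oe i j x *m oe j k (- y) *m oe i j (- x) = oe i k (- (x * y)).
  rewrite !oeE unip_commutator ?oemx_sqr // -opprB c3.
  by rewrite /unip scalerN scaleNr mulrC.
by rewrite /oe_conj -comm -[RHS]mulmxA oe_Nmul // mulmx1.
Qed.

Lemma oe_prod_cat (s1 s2 : seq (nat * nat * A)) :
  oe_prod n (s1 ++ s2) = oe_prod n s1 *m oe_prod n s2.
Proof. by elim: s1 => [|g s IH] /=; rewrite ?mul1mx // IH mulmxA. Qed.
End ElementaryConjugation.

(* p and q lie in two distinct pairs {2i, 2i+1}, both other than {0, 1}. *)
Definition apart n p q := [&& (1 < p < n.*2)%N, (1 < q < n.*2)%N, p != q & p != sig q].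

Lemma apart_sym n p q : apart n p q -> apart n q p.
Proof. by rewrite /apart /sig; case: ifP; case: ifP => *; lia. Qed.

Lemma exists_apart n q : (2 < n)%N -> (1 < q < n.*2)%N -> exists p, apart n p q.
Proof.
by exists (if (q < 4)%N then 4%N else 2%N); rewrite /apart /sig; case: ifP; case: ifP => *; lia.
Qed.

Lemma apart_range n k l : apart n k l -> (1 < k < n.*2)%N /\ (1 < l < n.*2)%N.
Proof. by case/and4P. Qed.

Lemma apart_neq n k l : apart n k l -> k != l.
Proof. by case/and4P. Qed.

Lemma apart_neq0 n k l : apart n k l -> k != 0%N /\ l != 0%N.
Proof. by case/and4P; case: k; case: l. Qed.

Section ApartTriples.
Variables (n p q : nat).
Hypothesis pq : apart n p q.

Lemma root_triple_0pq : root_triple n 0 p q.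
Proof. move: pq; rewrite /apart /root_triple ?sig0 /sig; repeat case: ifP => ?; move=> *; lia. Qed.

Lemma root_triple_p0q : root_triple n p 0 q.
Proof. move: pq; rewrite /apart /root_triple ?sig0 /sig; repeat case: ifP => ?; move=> *; lia. Qed.

Lemma root_triple_pq0 : root_triple n p q 0.
Proof. move: pq; rewrite /apart /root_triple ?sig0 /sig; repeat case: ifP => ?; move=> *; lia. Qed.
End ApartTriples.

Section IdealCoefficients.
Variables (R : comNzRingType) (I : {pred R}).
Hypothesis idealI : is_ideal I.

Lemma ideal_sum (J : Type) (s : seq J) (P : pred J) (F : J -> R) :
  (forall j, P j -> F j \in I) -> \sum_(j <- s | P j) F j \in I.
Proof. by case: idealI => I0 ID _ FI; apply: (big_ind (fun x => x \in I)). Qed.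

Lemma polyI2Ml r h : polyI2 I h -> polyI2 I (r * h).
Proof.
case: idealI => _ _ IM Ih k l; rewrite coefM coef_sum; apply: ideal_sum => i _.
by rewrite coefM; apply: ideal_sum => j _; apply: IM.
Qed.

Lemma polyI2Mr r h : polyI2 I h -> polyI2 I (h * r).
Proof. by rewrite mulrC; apply: polyI2Ml. Qed.

Lemma polyI2_cst2 c : c \in I -> polyI2 I (cst2 c).
Proof.
case: idealI => I0 _ _ Ic k l; rewrite /cst2 coefC.
by case: (k == 0%N); rewrite ?coef0 ?coefC //; case: (l == 0%N).
Qed.

Lemma polyI2_eval2 f u : polyI I f -> polyI2 I (eval2 f u).
Proof.
move=> If k l; rewrite /eval2 horner_coef !coef_sum; apply: ideal_sum => i _.
apply: (polyI2Mr _ _ k l); rewrite coef_map_id0; first exact: polyI2_cst2.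
by rewrite /cst2 !polyC0.
Qed.
End IdealCoefficients.

Section YDivisibility.
Variables (R : comNzRingType) (P : {poly {poly R}} -> Prop).
Hypothesis PMl : forall r h, P h -> P (r * h).
Local Notation Y := (varY R).

Definition Ydvd m (z : {poly {poly R}}) := exists2 h, P h & z = Y ^+ m * h.

Lemma Ydvd_exprM m k h : (m <= k)%N -> P h -> Ydvd m (Y ^+ k * h).
Proof.
move=> mk Ph; exists (Y ^+ (k - m) * h); first exact: PMl.
by rewrite mulrA -exprD subnKC.
Qed.

Lemma Ydvd_Ml m r z : Ydvd m z -> Ydvd m (r * z).
Proof. by move=> [h Ph ->]; exists (r * h); [exact: PMl | rewrite mulrCA]. Qed.

Lemma Ydvd_Mr m r z : Ydvd m z -> Ydvd m (z * r).
Proof. by rewrite mulrC; apply: Ydvd_Ml. Qed.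

Lemma Ydvd_N m z : Ydvd m z -> Ydvd m (- z).
Proof. by rewrite -mulN1r; apply: Ydvd_Ml. Qed.
End YDivisibility.

Section EO1Products.
Variables (R : comNzRingType) (I : {pred R}) (n : nat).
Hypothesis idealI : is_ideal I.
Hypothesis n_gt2 : (2 < n)%N.
Local Notation A := {poly {poly R}}.
Local Notation Y := (varY R).
Local Notation N := n.*2.
Local Notation oe := (@oe A n).
Local Notation oe_conj := (@oe_conj A n).
Local Notation YR := (@Ydvd R (fun _ => True)).
Local Notation YI := (@Ydvd R (polyI2 I)).

(* Closure of the two coefficient predicates; [done] uses these when the
   [Ydvd] lemmas are applied. *)
Let trueMl (r h : A) : True -> True := id.
Let IMl := polyI2Ml idealI.

Lemma Ydvd_polyI2Ml m u z : polyI2 I u -> YR m z -> YI m (u * z).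
Proof. by move=> Iu [h _ ->]; exists (u * h); [exact: polyI2Mr | rewrite mulrCA]. Qed.

Lemma oe_kl_commutatorY m k l h : apart n k l ->
  oe k l (Y ^+ (m + m) * h)
    = oe k 0 (Y ^+ m * h) *m oe 0 l (Y ^+ m) *m oe k 0 (- (Y ^+ m * h)) *m oe 0 l (- Y ^+ m).
Proof.
move=> kl; rewrite (oe_commutator _ _ (root_triple_p0q kl)).
by congr oe; rewrite exprD; ring.
Qed.

Definition EO1_poly_gen (t : nat * nat * A) :=
  oe_idx n t.1.1 t.1.2 /\ (t.1.1 = 0%N \/ t.1.2 = 0%N /\ polyI2 I t.2).

Definition EO1_Ydvd m (M : 'M[A]_N) := exists s : seq (nat * nat * A),
  (forall t, t \in s -> EO1_poly_gen t) /\
  M = oe_prod n [seq (t.1.1, t.1.2, Y ^+ m * t.2) | t <- s].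

Lemma EO1_poly_genP t : EO1_poly_gen t ->
  t.1.1 = 0%N /\ (1 < t.1.2 < N)%N \/ [/\ t.1.2 = 0%N, (1 < t.1.1 < N)%N & polyI2 I t.2].
Proof.
case: t => [[i j] h] [/= idx [Ei|[Ej Ih]]]; subst; [left | right]; split => //;
  move: idx; rewrite /oe_idx ?sig0 /sig; repeat case: ifP => ?; lia.
Qed.

Lemma EO1_Ydvd1 m : EO1_Ydvd m 1%:M.
Proof. by exists [::]. Qed.

Lemma EO1_YdvdM m M1 M2 : EO1_Ydvd m M1 -> EO1_Ydvd m M2 -> EO1_Ydvd m (M1 *m M2).
Proof.
move=> [s1 [gen1 ->]] [s2 [gen2 ->]]; exists (s1 ++ s2); split.
  by move=> t; rewrite mem_cat => /orP[]; [apply: gen1 | apply: gen2].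
by rewrite map_cat oe_prod_cat.
Qed.

Lemma EO1_Ydvd_0k m k z : (1 < k < N)%N -> YR m z -> EO1_Ydvd m (oe 0 k z).
Proof.
move=> kN [h _ ->]; exists [:: (0%N, k, h)]; split; last by rewrite /= mulmx1.
move=> t; rewrite inE => /eqP -> /=; split; last by left.
by move: kN; rewrite /oe_idx /= /sig; repeat case: ifP => ?; lia.
Qed.

Lemma EO1_Ydvd_k0 m k z : (1 < k < N)%N -> YI m z -> EO1_Ydvd m (oe k 0 z).
Proof.
move=> kN [h Ih ->]; exists [:: (k, 0%N, h)]; split; last by rewrite /= mulmx1.
move=> t; rewrite inE => /eqP -> /=; split; last by right.
by move: kN; rewrite /oe_idx /= sig0; lia.
Qed.

Lemma EO1_Ydvd_kl m k l z : apart n k l -> YI (m + m) z -> EO1_Ydvd m (oe k l z).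
Proof.
move=> kl [h Ih ->]; have [kN lN] := apart_range kl.
have Ik : YI m (Y ^+ m * h) by exists h.
have Rl : YR m (Y ^+ m) by exists 1; rewrite ?mulr1.
rewrite oe_kl_commutatorY //.
apply: EO1_YdvdM (EO1_YdvdM (EO1_YdvdM _ _) _) _.
- exact: EO1_Ydvd_k0.
- exact: EO1_Ydvd_0k.
- by apply: EO1_Ydvd_k0 => //; apply: Ydvd_N.
- by apply: EO1_Ydvd_0k => //; apply: Ydvd_N.
Qed.

Lemma EO1_Ydvd_conj_kl_l0 m k l a x : apart n k l -> YI m x ->
  EO1_Ydvd m (oe_conj k l a (oe l 0 x)).
Proof.
move=> kl Ix; have [kN lN] := apart_range kl.
rewrite (oe_conjl _ _ (root_triple_pq0 kl)).
by apply: EO1_YdvdM; apply: EO1_Ydvd_k0 => //; apply: Ydvd_Ml.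
Qed.

Lemma EO1_Ydvd_conj_kl_0k m k l a y : apart n k l -> YR m y ->
  EO1_Ydvd m (oe_conj k l a (oe 0 k y)).
Proof.
move=> kl Ry; have [kN lN] := apart_range kl.
rewrite (oe_conjr _ _ (root_triple_0pq kl)).
by apply: EO1_YdvdM; apply: EO1_Ydvd_0k => //; apply/(Ydvd_N trueMl)/(Ydvd_Mr trueMl).
Qed.

Lemma EO1_Ydvd_conj_kl_lk m k l a z : apart n k l -> YI (m + m) z ->
  EO1_Ydvd m (oe_conj k l a (oe l k z)).
Proof.
move=> kl [h Ih ->]; have lk := apart_sym kl; have kl' := apart_neq kl.
have Ih' : YI m (Y ^+ m * h) by exists h.
have RY : YR m (Y ^+ m) by exists 1; rewrite ?mulr1.
rewrite oe_kl_commutatorY // !oe_conjM //.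
apply: EO1_YdvdM (EO1_YdvdM (EO1_YdvdM _ _) _) _.
- exact: EO1_Ydvd_conj_kl_l0.
- exact: EO1_Ydvd_conj_kl_0k.
- by apply: EO1_Ydvd_conj_kl_l0 => //; apply: Ydvd_N.
- by apply: EO1_Ydvd_conj_kl_0k => //; apply: Ydvd_N.
Qed.

Lemma Y4m_split m h : Y ^+ (4 * m) * h = Y ^+ (m + m) * (Y ^+ (m + m) * h).
Proof. by rewrite mulrA -exprD; congr (_ ^+ _ * _); lia. Qed.

Lemma EO1_Ydvd_conj_0k_k0 m q c w : (1 < q < N)%N -> YI (4 * m) w ->
  EO1_Ydvd m (oe_conj 0 q c (oe q 0 w)).
Proof.
move=> qN [h Ih ->]; have [p pq] := exists_apart n_gt2 qN; have qp := apart_sym pq.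
have [[pN _] [_ q0]] := (apart_range pq, apart_neq0 pq).
have q0' : (0 != q)%N by rewrite eq_sym.
set al := Y ^+ (m + m); set be := Y ^+ (m + m) * h.
have Ibe : YI (m + m) be by exists h.
have Ibe' : YI m be by exists (Y ^+ m * h); [exact: IMl | rewrite mulrA -exprD].
have Ral : YR m al by exists (Y ^+ m) => //; exact: exprD.
rewrite Y4m_split -(oe_commutator _ _ (root_triple_pq0 qp)) !oe_conjM //.
rewrite !(oe_conjl _ _ (root_triple_0pq qp)) !(oe_conjr _ _ (root_triple_p0q pq)).
have -> : forall A1 X A2 Z : 'M[A]_N, A2 *m oe q p (- al) = oe q p (- al) *m A2 ->
    A1 *m oe q p al *m X *m (A2 *m oe q p (- al)) *m Z
    = A1 *m oe_conj q p al X *m A2 *m Z.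
  by move=> A1 X A2 Z comm; rewrite comm /oe_conj !mulmxA.
- apply: EO1_YdvdM (EO1_YdvdM (EO1_YdvdM _ _) _) _.
  + by apply: EO1_Ydvd_0k => //; apply: Ydvd_Ml.
  + rewrite oe_conjM; last exact: (apart_neq qp).
    apply: EO1_YdvdM; first by apply: EO1_Ydvd_conj_kl_lk => //; apply/Ydvd_N/Ydvd_Mr.
    by apply: EO1_Ydvd_conj_kl_l0.
  + by apply: EO1_Ydvd_0k => //; apply/Ydvd_Ml/Ydvd_N.
  + apply: EO1_YdvdM; first by apply: EO1_Ydvd_kl => //; apply/Ydvd_N/Ydvd_Mr/Ydvd_N.
    by apply: EO1_Ydvd_k0 => //; apply/Ydvd_N.
- by apply: oe_comm; symmetry; apply: oemx_kl_0l_comm; [lia | lia | exact: (apart_neq qp)].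
Qed.

Lemma EO1_Ydvd_conj_k0_0k m q c w : (1 < q < N)%N -> polyI2 I c -> YR (4 * m) w ->
  EO1_Ydvd m (oe_conj q 0 c (oe 0 q w)).
Proof.
move=> qN Ic [h _ ->]; have [p pq] := exists_apart n_gt2 qN; have qp := apart_sym pq.
have [[pN _] [_ q0]] := (apart_range pq, apart_neq0 pq).
have pq' := apart_neq pq.
set al := Y ^+ (m + m); set be := Y ^+ (m + m) * h.
have Ral : YR (m + m) al by exists 1 => //; rewrite mulr1.
have Ral' : YR m al by exists (Y ^+ m) => //; exact: exprD.
have Rbe' : YR m be by exists (Y ^+ m * h) => //; rewrite mulrA -exprD.
rewrite Y4m_split -(oe_commutator _ _ (root_triple_0pq pq)) !oe_conjM //.
rewrite !(oe_conjl _ _ (root_triple_p0q qp)) !(oe_conjr _ _ (root_triple_pq0 pq)).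
have -> : forall X1 A1 B1 X2 A2 B2 : 'M[A]_N,
    X1 *m A1 *m (B1 *m oe p q be) *m (X2 *m A2) *m (B2 *m oe p q (- be))
    = X1 *m A1 *m B1 *m oe_conj p q be (X2 *m A2 *m B2).
  by move=> *; rewrite /oe_conj !mulmxA.
apply: EO1_YdvdM (EO1_YdvdM (EO1_YdvdM _ _) _) _.
- by apply: EO1_Ydvd_kl => //; apply: Ydvd_polyI2Ml.
- exact: EO1_Ydvd_0k.
- by apply: EO1_Ydvd_k0 => //; rewrite mulrC; apply/Ydvd_N/Ydvd_polyI2Ml.
rewrite !oe_conjM //.
apply: EO1_YdvdM (EO1_YdvdM _ _) _.
- by apply: EO1_Ydvd_conj_kl_lk => //; apply/Ydvd_polyI2Ml/Ydvd_N.
- by apply: EO1_Ydvd_conj_kl_0k => //; apply: Ydvd_N.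
have comm x : oe p q be *m oe p 0 x = oe p 0 x *m oe p q be.
  by apply: oe_comm; apply: oemx_kl_k0_comm; [lia | lia |].
rewrite oe_conj_id ?comm //.
by apply: EO1_Ydvd_k0 => //; rewrite mulNr opprK mulrC; apply: Ydvd_polyI2Ml.
Qed.

Lemma EO1_Ydvd_conj_0k_l0 m k l c w : apart n l k -> YI (m + m) w ->
  EO1_Ydvd m (oe_conj 0 k c (oe l 0 w)).
Proof.
move=> lk [h Ih ->]; have [lN kN] := apart_range lk.
rewrite (oe_conjr _ _ (root_triple_p0q lk)).
apply: EO1_YdvdM; first by apply: EO1_Ydvd_kl => //; apply/Ydvd_N/Ydvd_Mr/Ydvd_exprM.
by apply: EO1_Ydvd_k0 => //; apply: Ydvd_exprM => //; lia.
Qed.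

Lemma EO1_Ydvd_conj_k0_0l m k l c w : apart n k l -> polyI2 I c -> YR (m + m) w ->
  EO1_Ydvd m (oe_conj k 0 c (oe 0 l w)).
Proof.
move=> kl Ic [h _ ->]; have [kN lN] := apart_range kl.
rewrite (oe_conjl _ _ (root_triple_p0q kl)).
apply: EO1_YdvdM; first by apply: EO1_Ydvd_kl => //; apply/Ydvd_polyI2Ml/Ydvd_exprM.
by apply: EO1_Ydvd_0k => //; apply: Ydvd_exprM => //; lia.
Qed.

Lemma EO1_Ydvd_conj_0k m k c t : (1 < k < N)%N -> EO1_poly_gen t ->
  EO1_Ydvd m (oe_conj 0 k c (oe t.1.1 t.1.2 (Y ^+ (4 * m) * t.2))).
Proof.
move=> kN; have k0 : (0 != k)%N by apply/eqP; lia.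
case: t => [[i j] h] /EO1_poly_genP[[/= -> jN] | [/= -> iN Ih]].
  rewrite oe_conj_id //; last by apply: oe_comm; apply: oemx_0k_0l_comm; lia.
  by apply: EO1_Ydvd_0k => //; apply: Ydvd_exprM => //; lia.
have [-> | ik] := eqVneq i k; first by apply: EO1_Ydvd_conj_0k_k0 => //; exists h.
have [-> | isk] := eqVneq i (sig k).
  rewrite oe_conj_id //; last by apply: oe_comm; apply: oemx_0k_sk0_comm; lia.
  by apply: EO1_Ydvd_k0; [exact: sig_range | apply: Ydvd_exprM => //; lia].
by apply: EO1_Ydvd_conj_0k_l0; [apply/and4P | apply: Ydvd_exprM => //; lia].
Qed.

Lemma EO1_Ydvd_conj_k0 m k c t : (1 < k < N)%N -> polyI2 I c -> EO1_poly_gen t ->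
  EO1_Ydvd m (oe_conj k 0 c (oe t.1.1 t.1.2 (Y ^+ (4 * m) * t.2))).
Proof.
move=> kN Ic; have k0 : (k != 0)%N by apply/eqP; lia.
case: t => [[i j] h] /EO1_poly_genP[[/= -> jN] | [/= -> iN Ih]]; last first.
  rewrite oe_conj_id //; last by apply: oe_comm; apply: oemx_k0_l0_comm; lia.
  by apply: EO1_Ydvd_k0 => //; apply: Ydvd_exprM => //; lia.
have [-> | jk] := eqVneq j k; first by apply: EO1_Ydvd_conj_k0_0k => //; exists h.
have [-> | jsk] := eqVneq j (sig k).
  have skN := sig_range kN; have sk1 : (1 < sig k)%N by case/andP: skN.
  have comm := oemx_0k_sk0_comm A n sk1; rewrite sigK in comm.
  rewrite oe_conj_id //; last by apply: oe_comm; rewrite comm.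
  by apply: EO1_Ydvd_0k => //; apply: Ydvd_exprM => //; lia.
by apply: EO1_Ydvd_conj_k0_0l => //; [apply/apart_sym/and4P | apply: Ydvd_exprM => //; lia].
Qed.

Lemma EO1_gen_neq (g : nat * nat * R) : EO1_gen n I g -> g.1.1 != g.1.2.
Proof. by case/orP => [/andP[/eqP -> ?] | /and3P[/eqP -> ? _]]; apply/eqP; lia. Qed.

Lemma EO1_Ydvd_conj_gen m (g : nat * nat * R) M : EO1_gen n I g ->
  EO1_Ydvd (4 * m) M -> EO1_Ydvd m (oe_conj g.1.1 g.1.2 (cst2 g.2) M).
Proof.
case: g => [[i j] c] gen [s [sgen ->]] /=; have ij := EO1_gen_neq gen.
move: gen; rewrite /EO1_gen /= => gen.
elim: s sgen => [|t s IH] sgen /=; first by rewrite /oe_conj mulmx1 oe_mulN //; exact: EO1_Ydvd1.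
rewrite oe_conjM //; apply: EO1_YdvdM; last by apply: IH => u us; apply: sgen; rewrite inE us orbT.
have tgen : EO1_poly_gen t by apply: sgen; rewrite mem_head.
case/orP: gen => [/andP[/eqP -> kN] | /and3P[/eqP -> kN Ic]] /=; first exact: EO1_Ydvd_conj_0k.
by apply: EO1_Ydvd_conj_k0 => //; apply: polyI2_cst2.
Qed.

Lemma EO1_Ydvd_conj_EO1 (eps : seq (nat * nat * R)) m M Einv : all (EO1_gen n I) eps ->
  Einv *m oe_prod n [seq (g.1.1, g.1.2, cst2 g.2) | g <- eps] = 1%:M ->
  EO1_Ydvd (4 ^ size eps * m) M ->
  EO1_Ydvd m (oe_prod n [seq (g.1.1, g.1.2, cst2 g.2) | g <- eps] *m M *m Einv).
Proof.
elim: eps m M Einv => [|g eps IH] m M Einv /=; first by rewrite mulmx1 mul1n mul1mx => _ ->; rewrite mulmx1.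
case/andP=> gen eps_gen; set E := oe_prod _ _ => inv EM.
set ge := oe g.1.1 g.1.2 (cst2 g.2).
have -> : ge *m E *m M *m Einv = oe_conj g.1.1 g.1.2 (cst2 g.2) (E *m M *m (Einv *m ge)).
  by rewrite /oe_conj -!mulmxA oe_mulN ?mulmx1 // EO1_gen_neq.
apply: EO1_Ydvd_conj_gen => //; apply: IH => //; first by rewrite -mulmxA.
by rewrite mulnA -expnSr.
Qed.
End EO1Products.

Theorem mainTheorem5 (R : comNzRingType) (I : {pred R}) (n : nat)
  (eps : seq (nat * nat * R)) (i j : nat) (f : {poly R}) :
  is_ideal I -> (3 <= n)%N ->
  all (EO1_gen n I) eps ->
  ((i == 0%N) && (2 <= j < n.*2)%N \/
   [/\ j = 0%N, (2 <= i < n.*2)%N & polyI I f]) ->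
  let E := oe_prod n [seq (g.1.1, g.1.2, cst2 g.2) | g <- eps] in
  let u := varY R ^+ (4 ^ size eps) * varX R in
  forall Einv : 'M[{poly {poly R}}]_(n.*2),
    E *m Einv = 1%:M -> Einv *m E = 1%:M ->
  exists s : seq (nat * nat * {poly {poly R}}),
    (forall t, t \in s -> oe_idx n t.1.1 t.1.2 /\
       ((t.1.1 = 0%N) \/ (t.1.2 = 0%N /\ polyI2 I t.2))) /\
    E *m oe n i j (u * eval2 f u) *m Einv
      = oe_prod n [seq (t.1.1, t.1.2, varY R * t.2) | t <- s].
Proof.
move=> idealI n_gt2 eps_gen ij E u Einv _ inv.
have u_div : u * eval2 f u = varY R ^+ (4 ^ size eps * 1) * (varX R * eval2 f u).
  by rewrite muln1 /u mulrA.
have gen : EO1_Ydvd I (4 ^ size eps * 1) (oe n i j (u * eval2 f u)).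
  rewrite u_div; case: ij => [/andP[/eqP -> jN] | [-> iN If]].
    by apply: EO1_Ydvd_0k => //; exists (varX R * eval2 f u).
  apply: EO1_Ydvd_k0 => //; exists (varX R * eval2 f u) => //.
  exact/(polyI2Ml idealI)/polyI2_eval2.
have [s [sgen ->]] := EO1_Ydvd_conj_EO1 idealI n_gt2 eps_gen inv gen.
by exists s.
Qed.
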